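(* Let $(V,E,d)$ be a multi-weighted game graph and $v\in V$. If $\tau$ is a strategy of Player 2 winning from $(v,\vec H)$ in the perfect half space game $\mathrm{PHS}(\widehat V,\widehat E,d)$ for some $\vec H\in\mathcal H$, then the strategy obtained from $\tau$ by projecting away the perfect half space components (and keeping track of them internally, starting from $\vec H$) is winning for Player 2 from $v$ in the bounding game $\mathrm{Bnd}(V,E,d)$. In particular, if Player 2 wins $\mathrm{PHS}(\widehat V,\widehat E,d)$ from $v$, he wins $\mathrm{Bnd}(V,E,d)$ from $v$; and if $\tau$ is positional and perfect half space oblivious, its projection is a positional strategy in $\mathrm{Bnd}(V,E,d)$.
   Context: A multi-weighted game graph is $(V,E,d)$ with $d\ge1$, finite $V=V_1\uplus V_2$, finite $E\subseteq V\times\mathbb Z^d\times V$ with every vertex having an outgoing edge, strict alternation of players, weights determined by endpoints, not all weights zero; $\|\vec w\|=\max_i|\vec w(i)|$, $\|E\|$ the maximal norm of an edge weight. Bounding game $\mathrm{Bnd}(V,E,d)$: a play $v_0\xrightarrow{\vec w_1}v_1\cdots$ is won by Player 1 iff $\{\|\sum_{j=1}^n\vec w_j\|:n\in\mathbb N\}$ is bounded; otherwise by Player 2. A partially perfect half space is a tuple $(\vec h_1,\dots,\vec h_k)$, $0\le k\le d$, of mutually orthogonal nonzero vectors in $\mathbb Z^d$; perfect if $k=d$; norm $\max_j\|\vec h_j\|$. $\mathcal H$ is the set of perfect half spaces of norm at most $|V|\cdot\|E\|$. $(\widehat V,\widehat E,d)$ has $\widehat V_i=V_i\times\mathcal H$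 and edges $(v,\vec H)\xrightarrow{\vec w}(v',\vec H')$ for $v\xrightarrow{\vec w}v'\in E$, $\vec H,\vec H'\in\mathcal H$, with $\vec H=\vec H'$ whenever $v\in V_1$. In $\mathrm{PHS}(\widehat V,\widehat E,d)$ a play $(v_0,\vec H_0)\xrightarrow{\vec w_1}(v_1,\vec H_1)\cdots$ is won by Player 2 if some partially perfect half space $(\vec g_1,\dots,\vec g_k)$, $k>0$, is a prefix of $\vec H_i$ for all large $i$, with $\limsup_n\sum_{j\le n}\vec w_j\cdot\vec g_k=-\infty$ and $\liminf_n\sum_{j\le n}\vec w_j\cdot\vec g_\ell<+\infty$ for $\ell<k$; otherwise by Player 1. Player 2 wins PHS from $v$ if he wins from $(v,\vec H)$ for some $\vec H\in\mathcal H$. A positional Player 2 strategy is perfect half space oblivious if at each $v\in V_2$ it makes the same move at $(v,\vec H)$ for all $\vec H$. *)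

From HB Require Import structures.
From mathcomp Require Import all_boot all_order all_algebra.
Set Implicit Arguments. Unset Strict Implicit. Unset Printing Implicit Defensive.
Import Order.TTheory GRing.Theory Num.Theory.

Definition vec (d : nat) := 'rV[int]_d.

Definition vnorm d (u : vec d) : nat := \max_(i < d) `|u ord0 i|%N.

Definition dot d (u v : vec d) : int := (\sum_(i < d) u ord0 i * v ord0 i)%R.

Definition ppHS d (H : seq (vec d)) : bool :=
  [&& size H <= d, all (fun h => h != 0%R) H
    & pairwise (fun a b => dot a b == 0%R) H].

Definition perfectHS d (H : seq (vec d)) : bool := ppHS H && (size H == d).

Definition hsnorm d (H : seq (vec d)) : nat := \max_(h <- H) vnorm h.

(* Vertices V : finType; own1 v = true iff v \in V_1; edges E : rel V;
   the weight of an edge is determined by its endpoints: w u v. *)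
Definition game_graph d (V : finType) (own1 : V -> bool) (E : rel V)
    (w : V -> V -> vec d) : Prop :=
  [/\ (1 <= d)%N,
      (forall u, exists v, E u v),
      (forall u v, E u v -> own1 u != own1 v)
    & exists u v, E u v && (w u v != 0%R)].

Definition Enorm d (V : finType) (E : rel V) (w : V -> V -> vec d) : nat :=
  \max_(u : V) \max_(v : V | E u v) vnorm (w u v).

Definition inHH d (V : finType) (E : rel V) (w : V -> V -> vec d)
    (H : seq (vec d)) : bool :=
  perfectHS H && (hsnorm H <= #|V| * Enorm E w).

(* A strategy maps a non-empty history [x_0; ...; x_n] to the next position. *)
Definition strategy (X : Type) := seq X -> X.

Definition legal2 (X : Type) (vert : pred X) (own1 : X -> bool) (edge : rel X)
    (tau : strategy X) : Prop :=
  forall x s, vert x -> path edge x s -> ~~ own1 (last x s) ->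
    edge (last x s) (tau (x :: s)).

Definition consistent2 (X : Type) (own1 : X -> bool) (edge : rel X)
    (tau : strategy X) (x0 : X) (p : nat -> X) : Prop :=
  [/\ p 0%N = x0,
      (forall n, edge (p n) (p n.+1))
    & (forall n, ~~ own1 (p n) -> p n.+1 = tau (mkseq p n.+1))].

Definition winning2_from (X : Type) (own1 : X -> bool) (edge : rel X)
    (win2 : (nat -> X) -> Prop) (tau : strategy X) (x0 : X) : Prop :=
  forall p, consistent2 own1 edge tau x0 p -> win2 p.

Definition positional2 (X : Type) (vert : pred X) (own1 : X -> bool)
    (edge : rel X) (tau : strategy X) (f : X -> X) : Prop :=
  forall x s, vert x -> path edge x s -> ~~ own1 (last x s) ->
    tau (x :: s) = f (last x s).

Definition Bnd_vert (V : finType) : pred V := predT.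

Definition psum d (V : Type) (w : V -> V -> vec d) (p : nat -> V) (n : nat)
  : vec d := (\sum_(j < n) w (p j) (p j.+1))%R.

Definition Bnd_win2 d (V : finType) (w : V -> V -> vec d) (p : nat -> V) : Prop :=
  ~ (exists B : nat, forall n, (vnorm (psum w p n) <= B)%N).

Definition Bnd_wins2 d (V : finType) (own1 : V -> bool) (E : rel V)
    (w : V -> V -> vec d) (v : V) : Prop :=
  exists sigma : strategy V,
    legal2 (@Bnd_vert V) own1 E sigma /\
    winning2_from own1 E (Bnd_win2 w) sigma v.

Definition hatX d (V : finType) := (V * seq (vec d))%type.

Definition hat_vert d (V : finType) (E : rel V) (w : V -> V -> vec d)
  : pred (hatX d V) := fun x => inHH E w x.2.

Definition hat_own1 d (V : finType) (own1 : V -> bool) (x : hatX d V) : bool :=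
  own1 x.1.

Definition hat_edge d (V : finType) (own1 : V -> bool) (E : rel V)
    (w : V -> V -> vec d) : rel (hatX d V) :=
  fun x y => [&& E x.1 y.1, inHH E w x.2, inHH E w y.2
                 & own1 x.1 ==> (x.2 == y.2)].

Definition PHS_win2 d (V : finType) (w : V -> V -> vec d)
    (p : nat -> hatX d V) : Prop :=
  let S := psum w (fun n => (p n).1) in
  exists g : seq (vec d),
    [/\ ppHS g, (0 < size g)%N,
        (exists N, forall i, (N <= i)%N -> prefix g (p i).2),
        (* limsup_n S_n . g_k = -oo *)
        (forall M : int, exists N, forall n, (N <= n)%N ->
            (dot (S n) (last 0%R g) <= M)%R)
      & (* liminf_n S_n . g_l < +oo for l < k *)
        (forall l, (l < (size g).-1)%N ->
            exists M : int, forall N, exists2 n, (N <= n)%N &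
              (dot (S n) (nth 0%R g l) <= M)%R)].

Definition PHS_wins2 d (V : finType) (own1 : V -> bool) (E : rel V)
    (w : V -> V -> vec d) (v : V) : Prop :=
  exists H, inHH E w H /\
  exists tau : strategy (hatX d V),
    legal2 (hat_vert E w) (hat_own1 own1) (hat_edge own1 E w) tau /\
    winning2_from (hat_own1 own1) (hat_edge own1 E w) (PHS_win2 w) tau (v, H).

Definition positional_oblivious2 d (V : finType) (own1 : V -> bool) (E : rel V)
    (w : V -> V -> vec d) (tau : strategy (hatX d V)) : Prop :=
  exists f : hatX d V -> hatX d V,
    positional2 (hat_vert E w) (hat_own1 own1) (hat_edge own1 E w) tau f /\
    (forall v H H', ~~ own1 v -> inHH E w H -> inHH E w H' ->
       f (v, H) = f (v, H')).

(* Lift a history v_0 ... v_n of Bnd to a history (v_0,H_0) ... (v_n,H_n),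
   with H_0 = H, H_{i+1} = H_i if v_i in V_1, and otherwise H_{i+1} is the
   half space component chosen by tau at the lifted prefix. *)
Fixpoint lift_aux d (V : finType) (own1 : V -> bool)
    (tau : strategy (hatX d V)) (acc : seq (hatX d V)) (Hc : seq (vec d))
    (vs : seq V) : seq (hatX d V) :=
  match vs with
  | [::] => acc
  | v :: vs' =>
      let acc' := rcons acc (v, Hc) in
      lift_aux own1 tau acc' (if own1 v then Hc else (tau acc').2) vs'
  end.

Definition lift_hist d (V : finType) (own1 : V -> bool)
    (tau : strategy (hatX d V)) (H : seq (vec d)) (vs : seq V) :=
  lift_aux own1 tau [::] H vs.

Definition proj_strategy d (V : finType) (own1 : V -> bool)
    (tau : strategy (hatX d V)) (H : seq (vec d)) : strategy V :=
  fun vs => (tau (lift_hist own1 tau H vs)).1.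

From HB Require Import structures.
From mathcomp Require Import all_boot all_order all_algebra.
From mathcomp Require Import zify.
Import Order.TTheory GRing.Theory Num.Theory.
Set Implicit Arguments. Unset Strict Implicit. Unset Printing Implicit Defensive.

(* Lift a play of Bnd to a play of PHS by recording the half space that tau
   picks at each step.  The lifted play is consistent with tau, so it is won
   by Player 2: for the last vector h of the witnessing half space, the scalar
   products (sum_{j<=n} w_j) . h are unbounded below.  Since |u . h| is at most
   d ||u|| ||h||, the partial sums themselves are unbounded, i.e. Player 2 wins
   the projected play of Bnd. *)

Lemma abs_coord_le_vnorm d (u : vec d) (i : 'I_d) :
  (`|u ord0 i| <= Posz (vnorm u))%R.
Proof.
by rewrite -abszE lez_nat; apply: (leq_bigmax (F := fun i => `|u ord0 i|%N)).
Qed.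

Lemma abs_dot_le d (u h : vec d) :
  (`|dot u h| <= Posz (d * (vnorm u * vnorm h)))%R.
Proof.
rewrite /dot; apply: (le_trans (ler_norm_sum _ _ _)).
have -> : Posz (d * (vnorm u * vnorm h)) =
          (\sum_(i < d) Posz (vnorm u * vnorm h))%R.
  by rewrite sumr_const card_ord -mulr_natr natz -PoszM mulnC.
apply: ler_sum => i _; rewrite normrM PoszM.
by apply: ler_pM; rewrite ?normr_ge0 ?abs_coord_le_vnorm.
Qed.

Lemma vnorm_unbounded_of_dot d (S : nat -> vec d) (h : vec d) :
  (forall M : int, exists n, (dot (S n) h <= M)%R) ->
  ~ exists B : nat, forall n, (vnorm (S n) <= B)%N.
Proof.
move=> dot_unbounded [B le_SB].
have [n le_dot] := dot_unbounded (- Posz (d * (B * vnorm h)) - 1)%R.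
have := abs_dot_le (S n) h; rewrite ler_norml => /andP [ge_dot _].
have : (d * (vnorm (S n) * vnorm h) <= d * (B * vnorm h))%N.
  by rewrite leq_mul2l leq_mul2r le_SB !orbT.
lia.
Qed.

Lemma sorted_mkseqP (T : Type) (e : rel T) (f : nat -> T) n :
  reflect (forall i, (i.+1 < n)%N -> e (f i) (f i.+1)) (sorted e (mkseq f n)).
Proof.
apply: (iffP (sortedP (f 0%N))); rewrite size_mkseq => edges i lt_in.
  by have := edges i lt_in; rewrite !nth_mkseq // ltnW.
by rewrite !nth_mkseq ?edges // ltnW.
Qed.

Section Projection.

Variables (d : nat) (V : finType) (own1 : V -> bool) (E : rel V).
Variables (w : V -> V -> vec d) (tau : strategy (hatX d V)).

Local Notation hedge := (hat_edge own1 E w).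

(* The half space component that lift_aux attaches to the vertex after vs. *)
Fixpoint next_hs (acc : seq (hatX d V)) (Hc : seq (vec d)) (vs : seq V)
  : seq (vec d) :=
  match vs with
  | [::] => Hc
  | v :: vs' =>
      let acc' := rcons acc (v, Hc) in
      next_hs acc' (if own1 v then Hc else (tau acc').2) vs'
  end.

Lemma lift_aux_rcons vs v acc Hc :
  lift_aux own1 tau acc Hc (rcons vs v) =
  rcons (lift_aux own1 tau acc Hc vs) (v, next_hs acc Hc vs).
Proof. by elim: vs acc Hc => [|a vs IH] acc Hc //=; rewrite IH. Qed.

Lemma next_hs_rcons vs v acc Hc :
  next_hs acc Hc (rcons vs v) =
  if own1 v then next_hs acc Hc vs
  else (tau (rcons (lift_aux own1 tau acc Hc vs) (v, next_hs acc Hc vs))).2.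
Proof. by elim: vs acc Hc => [|a vs IH] acc Hc //=; rewrite IH. Qed.

Arguments next_hs : simpl never.

Lemma last_lift_hist H x s y :
  last y (lift_hist own1 tau H (x :: s)) =
  (last x s, next_hs [::] H (belast x s)).
Proof. by rewrite /lift_hist lastI lift_aux_rcons last_rcons. Qed.

Lemma hat_path_last_inHH x s :
  path hedge x s -> inHH E w x.2 -> inHH E w (last x s).2.
Proof.
elim: s x => [|y s IH] x //= /andP [xy ys] _.
by apply: IH ys _; case/and4P: xy.
Qed.

Variables (H : seq (vec d)).
Hypothesis HH : inHH E w H.
Hypothesis tau_legal : legal2 (hat_vert E w) (hat_own1 own1) hedge tau.

Lemma lift_hist_path x s : path E x s ->
  exists s', lift_hist own1 tau H (x :: s) = (x, H) :: s' /\
             path hedge (x, H) s'.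
Proof.
elim/last_ind: s => [|t v IH]; first by exists [::].
rewrite rcons_path => /andP [path_t Evv].
have [t' [lift_t path_t']] := IH path_t.
have last_t' : last (x, H) t' = (last x t, next_hs [::] H (belast x t)).
  by rewrite -(last_lift_hist H x t (x, H)) lift_t.
have in_last := hat_path_last_inHH path_t' HH; rewrite last_t' /= in in_last.
exists (rcons t' (v, next_hs [::] H (x :: t))); split.
  by rewrite /lift_hist -rcons_cons lift_aux_rcons -/(lift_hist _ _ _ _) lift_t.
rewrite rcons_path path_t' last_t' /hat_edge /= Evv /=.
rewrite [x :: t]lastI next_hs_rcons.
have -> : rcons (lift_hist own1 tau H (belast x t))
            (last x t, next_hs [::] H (belast x t)) = (x, H) :: t'.
  by rewrite -lift_t /lift_hist [x :: t]lastI lift_aux_rcons.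
case: ifP => own_last; first by rewrite in_last eqxx.
have := @tau_legal (x, H) t' HH path_t'.
rewrite last_t' /hat_own1 /= own_last => /(_ isT).
by case/and4P => _ _ -> _; rewrite in_last.
Qed.

Lemma proj_strategy_legal : legal2 (@Bnd_vert V) own1 E (proj_strategy own1 tau H).
Proof.
move=> x s _ path_s own2.
have [s' [lift_s path_s']] := lift_hist_path path_s.
have := last_lift_hist H x s (x, H); rewrite lift_s /= => last_s'.
have := @tau_legal (x, H) s' HH path_s'; rewrite last_s' /hat_own1 /=.
by rewrite /proj_strategy lift_s => /(_ own2) /and4P [].
Qed.

Section LiftedPlay.

Variable p : nat -> V.

Definition lift_play n : hatX d V := (p n, next_hs [::] H (mkseq p n)).

Lemma lift_hist_mkseq n : lift_hist own1 tau H (mkseq p n) = mkseq lift_play n.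
Proof.
elim: n => [|n IH] //.
by rewrite !mkseqS /lift_hist lift_aux_rcons -/(lift_hist _ _ _ _) IH.
Qed.

Lemma lift_play_edge : (forall n, E (p n) (p n.+1)) ->
  forall n, hedge (lift_play n) (lift_play n.+1).
Proof.
move=> Ep n.
have /lift_hist_path [s' [lift_p path_s']] : path E (p 0%N) (map p (iota 1 n.+1)).
  by apply/(sorted_mkseqP E p n.+2) => i _; apply: Ep.
have : sorted hedge (mkseq lift_play n.+2).
  by rewrite -lift_hist_mkseq [mkseq p _]/= lift_p.
by move/sorted_mkseqP; apply.
Qed.

Lemma lift_play_consistent v :
  consistent2 own1 E (proj_strategy own1 tau H) v p ->
  consistent2 (hat_own1 own1) hedge tau (v, H) lift_play.
Proof.
case=> p0 Ep p_follows; split; first by rewrite /lift_play p0.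
  exact: lift_play_edge.
move=> n own2; rewrite /hat_own1 /= in own2.
rewrite /lift_play (p_follows n own2) /proj_strategy lift_hist_mkseq.
rewrite [mkseq p n.+1]mkseqS next_hs_rcons (negbTE own2).
by rewrite -/(lift_hist _ _ _ _) lift_hist_mkseq -mkseqS; case: (tau _).
Qed.

Lemma PHS_win2_lift_play : PHS_win2 w lift_play -> Bnd_win2 w p.
Proof.
case=> g [_ _ _ dot_to_minus_infty _].
apply: (@vnorm_unbounded_of_dot _ _ (last 0%R g)) => M.
by have [N le_dot] := dot_to_minus_infty M; exists N; apply: le_dot.
Qed.

End LiftedPlay.

Lemma proj_strategy_winning v :
  winning2_from (hat_own1 own1) hedge (PHS_win2 w) tau (v, H) ->
  winning2_from own1 E (Bnd_win2 w) (proj_strategy own1 tau H) v.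
Proof.
move=> tau_wins p p_cons.
exact/PHS_win2_lift_play/tau_wins/lift_play_consistent.
Qed.

Lemma proj_strategy_positional : positional_oblivious2 own1 E w tau ->
  exists g : V -> V, positional2 (@Bnd_vert V) own1 E (proj_strategy own1 tau H) g.
Proof.
case=> f [f_pos f_obl]; exists (fun u => (f (u, H)).1) => x s _ path_s own2.
have [s' [lift_s path_s']] := lift_hist_path path_s.
have := last_lift_hist H x s (x, H); rewrite lift_s /= => last_s'.
have := hat_path_last_inHH path_s' HH; rewrite last_s' /= => in_last.
rewrite /proj_strategy lift_s (f_pos (x, H) s' HH path_s') ?last_s' //.
by rewrite (f_obl _ _ _ own2 in_last HH).
Qed.

End Projection.

Theorem mainTheorem7 (d : nat) (V : finType) (own1 : V -> bool) (E : rel V)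
    (w : V -> V -> vec d) :
  game_graph own1 E w ->
  (* main claim *)
  (forall (v : V) (H : seq (vec d)) (tau : strategy (hatX d V)),
     inHH E w H ->
     legal2 (hat_vert E w) (hat_own1 own1) (hat_edge own1 E w) tau ->
     winning2_from (hat_own1 own1) (hat_edge own1 E w) (PHS_win2 w) tau (v, H) ->
     legal2 (@Bnd_vert V) own1 E (proj_strategy own1 tau H) /\
     winning2_from own1 E (Bnd_win2 w) (proj_strategy own1 tau H) v)
  /\
  (* in particular *)
  (forall v : V, PHS_wins2 own1 E w v -> Bnd_wins2 own1 E w v)
  /\
  (* positional and oblivious strategies project to positional strategies *)
  (forall (H : seq (vec d)) (tau : strategy (hatX d V)),
     inHH E w H ->
     legal2 (hat_vert E w) (hat_own1 own1) (hat_edge own1 E w) tau ->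
     positional_oblivious2 own1 E w tau ->
     exists g : V -> V,
       positional2 (@Bnd_vert V) own1 E (proj_strategy own1 tau H) g).
Proof.
move=> _; split.
  move=> v H tau HH tau_legal tau_wins.
  by split; [exact: proj_strategy_legal HH tau_legal | exact: proj_strategy_winning].
split.
  move=> v [H [HH [tau [tau_legal tau_wins]]]]; exists (proj_strategy own1 tau H).
  by split; [exact: proj_strategy_legal HH tau_legal | exact: proj_strategy_winning].
move=> H tau HH tau_legal.
exact: (proj_strategy_positional (tau := tau) HH tau_legal).
Qed.
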